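(* Let $\{\Phi^{(n)}\}_{n\ge1}$ be a sequence of finite crystallographic root systems and, for each $n$, let $\Psi^{(n)}$ be an antichain in the root poset of $\Phi^{(n)}$. Then the variance of $\mathcal{X}_{\Psi^{(n)}}$ grows linearly with $|\Psi^{(n)}|$: there are constants $c,C>0$ and $N$ such that $c\,|\Psi^{(n)}|\le\operatorname{Var}(\mathcal{X}_{\Psi^{(n)}})\le C\,|\Psi^{(n)}|$ for all $n\ge N$.
   Context: A finite crystallographic root system $\Phi$ has simple roots $\Delta$, positive roots $\Phi^+$ and Weyl group $W$. The root poset is the partial order on $\Phi^+$ generated by $\beta\prec\gamma$ whenever $\gamma-\beta\in\Delta$; an antichain is a set of pairwise incomparable positive roots. For $\beta\in\Phi^+$, $\mathcal{X}_\beta$ is the Bernoulli random variable on $W$ (uniform) with $\mathcal{X}_\beta(w)=1$ if $w(\beta)\in-\Phi^+$ and $0$ otherwise; $\mathcal{X}_\Psi=\sum_{\beta\in\Psi}\mathcal{X}_\beta$. *)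

From HB Require Import structures.
From mathcomp Require Import all_boot all_order all_algebra all_fingroup.
From mathcomp Require Import boolp reals.
Set Implicit Arguments. Unset Strict Implicit. Unset Printing Implicit Defensive.
Import Order.TTheory GRing.Theory Num.Theory.
Local Open Scope ring_scope.

Section RootSystems.
Variable R : realType.
Variables (d m : nat).

Definition dotp (u v : 'rV[R]_d) : R := \sum_(i < d) u 0 i * v 0 i.

Definition refl (a b : 'rV[R]_d) : 'rV[R]_d :=
  b - (2 * dotp b a / dotp a a) *: a.

Definition is_root_system (Phi : 'I_m -> 'rV[R]_d) : Prop :=
  [/\ injective Phi,
      (forall i, Phi i != 0),
      (forall i j, exists k, Phi k = refl (Phi i) (Phi j)),
      (forall i j, 2 * dotp (Phi j) (Phi i) / dotp (Phi i) (Phi i) \is a Num.int)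
    & (forall i j (a : R), Phi j = a *: Phi i -> Phi j = Phi i \/ Phi j = - Phi i)].

Definition is_simple_system (Phi : 'I_m -> 'rV[R]_d) (Delta : {set 'I_m}) : Prop :=
  (forall c : 'I_m -> R, \sum_(s in Delta) c s *: Phi s = 0 ->
     forall s, s \in Delta -> c s = 0) /\
  (forall j, exists c : 'I_m -> int,
     Phi j = \sum_(s in Delta) (c s)%:~R *: Phi s /\
     ((forall s, (0 <= c s)%R) \/ (forall s, (c s <= 0)%R))).

Definition positive_root (Phi : 'I_m -> 'rV[R]_d) (Delta : {set 'I_m}) (j : 'I_m) : Prop :=
  exists c : 'I_m -> int, (forall s, (0 <= c s)%R) /\
     Phi j = \sum_(s in Delta) (c s)%:~R *: Phi s.

Definition in_neg_positive (Phi : 'I_m -> 'rV[R]_d) (Delta : {set 'I_m}) (k : 'I_m) : Prop :=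
  exists k', positive_root Phi Delta k' /\ Phi k = - Phi k'.

Definition root_cover (Phi : 'I_m -> 'rV[R]_d) (Delta : {set 'I_m}) (j k : 'I_m) : Prop :=
  positive_root Phi Delta j /\ positive_root Phi Delta k /\
  exists s, s \in Delta /\ Phi k - Phi j = Phi s.

Inductive root_le (Phi : 'I_m -> 'rV[R]_d) (Delta : {set 'I_m}) : 'I_m -> 'I_m -> Prop :=
  | root_le_refl j : root_le Phi Delta j j
  | root_le_step j k l : root_le Phi Delta j k -> root_cover Phi Delta k l ->
                         root_le Phi Delta j l.

Definition antichain (Phi : 'I_m -> 'rV[R]_d) (Delta : {set 'I_m}) (Psi : {set 'I_m}) : Prop :=
  (forall j, j \in Psi -> positive_root Phi Delta j) /\
  (forall j k, j \in Psi -> k \in Psi -> j != k -> ~ root_le Phi Delta j k).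

(* The Weyl group, realised (faithfully) through its action on the roots: the
   subgroup of permutations of the root indices generated by the permutations
   induced by the reflections s_alpha, alpha in Phi. *)
Definition refl_perms (Phi : 'I_m -> 'rV[R]_d) : {set {perm 'I_m}} :=
  [set p : {perm 'I_m} | `[< exists i, forall j, Phi (p j) = refl (Phi i) (Phi j) >]].

Definition weyl (Phi : 'I_m -> 'rV[R]_d) : {group {perm 'I_m}} :=
  <<refl_perms Phi>>%G.

Definition X_Psi (Phi : 'I_m -> 'rV[R]_d) (Delta Psi : {set 'I_m}) (w : {perm 'I_m}) : R :=
  (#|[set j in Psi | `[< in_neg_positive Phi Delta (w j) >]]|)%:R.

Definition expect (Phi : 'I_m -> 'rV[R]_d) (f : {perm 'I_m} -> R) : R :=
  (\sum_(w in weyl Phi) f w) / (#|weyl Phi|)%:R.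

Definition var_X (Phi : 'I_m -> 'rV[R]_d) (Delta Psi : {set 'I_m}) : R :=
  expect Phi (fun w => (X_Psi Phi Delta Psi w) ^+ 2)
  - (expect Phi (X_Psi Phi Delta Psi)) ^+ 2.

End RootSystems.

From HB Require Import structures.
From mathcomp Require Import all_boot all_order all_algebra all_fingroup.
From mathcomp Require Import boolp reals.
From mathcomp Require Import ring lra zify.
Import Order.TTheory GRing.Theory Num.Theory.
Set Implicit Arguments. Unset Strict Implicit. Unset Printing Implicit Defensive.
Local Open Scope ring_scope.

(* Write Var(X_Psi) as the sum over pairs (b, g) of Psi of P(w b < 0 /\ w g < 0) - 1/4;
   the diagonal terms are 1/4, since w and w s_b negate b exactly once between them.
   Two distinct elements of an antichain have (b, g) <= 0, for otherwise b - g or g - b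
   would be a positive root and b, g would be comparable.  Hence b and g span a rank-two
   system of type A1 x A1, A2, B2 or G2, whose Weyl group D is dihedral of order 2h with
   h = 2, 3, 4, 6, and every coset w D contains exactly one element negating both b and g:
   the pair term is 1/(2h) - 1/4 <= 0, which gives Var <= |Psi| / 4.  In each of the four
   types 1/(2h) - 1/4 >= cos(b, g) / 5, and the double sum of cos(b, g) is the squared
   length of the sum of the unit vectors b / |b|, so Var >= |Psi| / 20. *)

Lemma sum_in_if_eq (V : nmodType) (I : finType) (A : {pred I}) (F : I -> V) s :
  s \in A -> \sum_(t in A) (if t == s then F t else 0) = F s.
Proof. by move=> sA; rewrite -big_mkcondr (big_pred1 s) // => t; rewrite andb_idl // => /eqP->. Qed.

Lemma card_set_count1_cosets (gT : finGroupType) (W : {group gT}) (A : pred gT)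
  (vs : seq gT) : {subset vs <= W} ->
  (forall w, w \in W -> count (fun v => A (v * w)%g) vs = 1%N) ->
  (#|[set w in W | A w]| * size vs)%N = #|W|.
Proof.
move=> vsW count1; have -> : #|W| = \sum_(w in W) \sum_(v <- vs | A (v * w)%g) 1.
  by rewrite -sum1_card; apply: eq_bigr => w wW; rewrite sum1_count count1.
rewrite (exchange_big_dep predT) //= big_seq (eq_bigr (fun _ => #|[set w in W | A w]|)).
  by rewrite -big_seq big_const_seq count_predT iter_addn_0.
move=> v /vsW vW; rewrite -sum1_card (reindex_inj (mulgI v^-1)%g) /=.
by apply: eq_bigl => w; rewrite inE mulKVg groupMl // groupV.
Qed.

Section DotProduct.
Variables (R : realType) (d : nat).
Implicit Types (u v w a b : 'rV[R]_d) (x : R).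

Lemma dotpC u v : dotp u v = dotp v u.
Proof. by apply: eq_bigr => i _; rewrite mulrC. Qed.

Lemma dotpDl u v w : dotp (u + v) w = dotp u w + dotp v w.
Proof. by rewrite /dotp -big_split; apply: eq_bigr => i _; rewrite mxE mulrDl. Qed.

Lemma dotpZl x u w : dotp (x *: u) w = x * dotp u w.
Proof. by rewrite /dotp mulr_sumr; apply: eq_bigr => i _; rewrite mxE mulrA. Qed.

Lemma dotpNl u w : dotp (- u) w = - dotp u w.
Proof. by rewrite -scaleN1r dotpZl mulN1r. Qed.

Lemma dotpBl u v w : dotp (u - v) w = dotp u w - dotp v w.
Proof. by rewrite dotpDl dotpNl. Qed.

Lemma dotpZr x u w : dotp w (x *: u) = x * dotp w u.
Proof. by rewrite dotpC dotpZl dotpC. Qed.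

Lemma dotpNr u w : dotp w (- u) = - dotp w u.
Proof. by rewrite dotpC dotpNl dotpC. Qed.

Lemma dotpBr u v w : dotp w (u - v) = dotp w u - dotp w v.
Proof. by rewrite dotpC dotpBl !(dotpC w). Qed.

Lemma dotp_suml (I : finType) (P : pred I) (F : I -> 'rV[R]_d) w :
  dotp (\sum_(i | P i) F i) w = \sum_(i | P i) dotp (F i) w.
Proof.
have dotp0l : dotp 0 w = 0 by rewrite /dotp big1 // => i _; rewrite mxE mul0r.
exact: (big_morph _ (fun u v => dotpDl u v w) dotp0l).
Qed.

Lemma dotp_sumr (I : finType) (P : pred I) (F : I -> 'rV[R]_d) w :
  dotp w (\sum_(i | P i) F i) = \sum_(i | P i) dotp w (F i).
Proof. by rewrite dotpC dotp_suml; apply: eq_bigr => i _; rewrite dotpC. Qed.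

Lemma dotpp_ge0 u : 0 <= dotp u u.
Proof. by apply: sumr_ge0 => i _; rewrite -expr2 sqr_ge0. Qed.

Lemma dotpp_eq0 u : (dotp u u == 0) = (u == 0).
Proof.
apply/idP/eqP => [|->]; last by rewrite /dotp big1 // => i _; rewrite mxE mul0r.
rewrite /dotp psumr_eq0 => [/allP u0|i _]; last by rewrite -expr2 sqr_ge0.
apply/rowP => i; rewrite mxE; apply/eqP; rewrite -sqrf_eq0 expr2.
by have /implyP := u0 i (mem_index_enum i); apply.
Qed.

Lemma dotpp_gt0 u : u != 0 -> 0 < dotp u u.
Proof. by rewrite lt_def dotpp_eq0 dotpp_ge0 andbT. Qed.

Lemma refl_lin a x y u v : refl a (x *: u + y *: v) = x *: refl a u + y *: refl a v.
Proof. by rewrite /refl dotpDl !dotpZl; apply/rowP => i; rewrite !mxE; ring. Qed.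

Lemma refl_self a : a != 0 -> refl a a = - a.
Proof.
move=> a_neq0; rewrite /refl mulfK ?dotpp_eq0 //.
by apply/rowP => i; rewrite !mxE; ring.
Qed.

Lemma refl_invol a b : a != 0 -> refl a (refl a b) = b.
Proof.
move=> a_neq0; have aa_neq0 : dotp a a != 0 by rewrite dotpp_eq0.
by rewrite /refl dotpBl dotpZl; apply/rowP => i; rewrite !mxE; field.
Qed.

End DotProduct.

Section RootSystem.
Variables (R : realType) (d m : nat) (Phi : 'I_m -> 'rV[R]_d).
Hypothesis hPhi : is_root_system Phi.

Lemma root_inj : injective Phi. Proof. by case: hPhi. Qed.
Lemma root_neq0 i : Phi i != 0. Proof. by case: hPhi. Qed.
Lemma root_refl_closed i j : exists k, Phi k = refl (Phi i) (Phi j).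
Proof. by case: hPhi. Qed.
Lemma root_reduced i j a : Phi j = a *: Phi i -> Phi j = Phi i \/ Phi j = - Phi i.
Proof. by case: hPhi => _ _ _ _; apply. Qed.

Lemma root_opp i : exists k, Phi k = - Phi i.
Proof.
by have [k hk] := root_refl_closed i i; exists k; rewrite hk refl_self ?root_neq0.
Qed.

Lemma dotp_root_gt0 i : 0 < dotp (Phi i) (Phi i).
Proof. exact/dotpp_gt0/root_neq0. Qed.

Definition cartan i j : R := 2 * dotp (Phi j) (Phi i) / dotp (Phi i) (Phi i).

Lemma cartan_int i j : cartan i j \is a Num.int.
Proof. by case: hPhi => _ _ _ + _; apply. Qed.

Lemma reflE i j : refl (Phi i) (Phi j) = Phi j - cartan i j *: Phi i.
Proof. by []. Qed.

Lemma cartan_scale_gt0 i : 0 < 2 / dotp (Phi i) (Phi i).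
Proof. by rewrite divr_gt0 ?dotp_root_gt0. Qed.

Lemma cartanE i j : cartan i j = 2 / dotp (Phi i) (Phi i) * dotp (Phi i) (Phi j).
Proof. by rewrite /cartan mulrAC dotpC. Qed.

Lemma cartan_gt0 i j : (0 < cartan i j) = (0 < dotp (Phi i) (Phi j)).
Proof. by rewrite cartanE pmulr_rgt0 ?cartan_scale_gt0. Qed.

Lemma cartan_lt0 i j : (cartan i j < 0) = (dotp (Phi i) (Phi j) < 0).
Proof. by rewrite cartanE pmulr_rlt0 ?cartan_scale_gt0. Qed.

Lemma cartan_eq0 i j : (cartan i j == 0) = (dotp (Phi i) (Phi j) == 0).
Proof. by rewrite cartanE mulf_eq0 (negbTE (lt0r_neq0 (cartan_scale_gt0 i))). Qed.

(* Cauchy-Schwarz is strict because a reduced root system contains no other multiple of a root. *)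
Lemma root_cauchy_schwarz_lt i j : Phi j != Phi i -> Phi j != - Phi i ->
  dotp (Phi i) (Phi j) ^+ 2 < dotp (Phi i) (Phi i) * dotp (Phi j) (Phi j).
Proof.
move=> ne_ji ne_opp; have ii_gt0 := dotp_root_gt0 i.
pose t := dotp (Phi i) (Phi j) / dotp (Phi i) (Phi i).
have : Phi j - t *: Phi i != 0.
  apply: contraNneq ne_ji => /eqP; rewrite subr_eq0 => /eqP /root_reduced.
  by case=> [-> //|e]; rewrite e eqxx in ne_opp.
move=> /dotpp_gt0; rewrite dotpBl !dotpBr !dotpZl !dotpZr (dotpC (Phi j)).
have -> : dotp (Phi j) (Phi j) - t * dotp (Phi i) (Phi j) -
          (t * dotp (Phi i) (Phi j) - t * (t * dotp (Phi i) (Phi i))) =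
          dotp (Phi j) (Phi j) - dotp (Phi i) (Phi j) ^+ 2 / dotp (Phi i) (Phi i).
  by rewrite /t; field; exact: lt0r_neq0.
by rewrite subr_gt0 ltr_pdivrMr // mulrC.
Qed.

Lemma cartan_mul_lt4 i j : Phi j != Phi i -> Phi j != - Phi i ->
  cartan i j * cartan j i < 4.
Proof.
move=> ne_ji ne_opp; have ii_gt0 := dotp_root_gt0 i; have jj_gt0 := dotp_root_gt0 j.
have -> : cartan i j * cartan j i = 4 * (dotp (Phi i) (Phi j) ^+ 2 /
            (dotp (Phi i) (Phi i) * dotp (Phi j) (Phi j))).
  by rewrite /cartan (dotpC (Phi j)); field; rewrite !lt0r_neq0.
rewrite -[ltRHS]mulr1 ltr_pM2l // ltr_pdivrMr ?mul1r ?mulr_gt0 //.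
exact: root_cauchy_schwarz_lt.
Qed.

Lemma root_sub_closed i j : 0 < dotp (Phi i) (Phi j) -> Phi i != Phi j ->
  exists k, Phi k = Phi i - Phi j.
Proof.
move=> ij_gt0 ne_ij.
have ne_opp : Phi j != - Phi i.
  apply: contraTneq ij_gt0 => ->; rewrite dotpNr oppr_gt0 -leNgt ltW //.
  exact: dotp_root_gt0.
have ne_ji : Phi j != Phi i by rewrite eq_sym.
have /intrP[z1 e1] := cartan_int j i; have /intrP[z2 e2] := cartan_int i j.
have z1_gt0 : 0 < z1 by rewrite -(ltr0z R) -e1 cartan_gt0 dotpC.
have z2_gt0 : 0 < z2 by rewrite -(ltr0z R) -e2 cartan_gt0.
have z12_lt4 : z2 * z1 < 4 by rewrite -(ltr_int R) intrM -e1 -e2 cartan_mul_lt4.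
have [z1_1|z2_1] : z1 = 1 \/ z2 = 1 by lia.
  have [k hk] := root_refl_closed j i.
  by exists k; rewrite hk reflE e1 z1_1 scale1r.
have [k hk] := root_refl_closed i j; have [k' hk'] := root_opp k.
by exists k'; rewrite hk' hk reflE e2 z2_1 scale1r opprB.
Qed.

Variable Delta : {set 'I_m}.
Hypothesis hDelta : is_simple_system Phi Delta.

Definition coef j : 'I_m -> int := projT1 (cid (hDelta.2 j)).

Lemma coefE j : Phi j = \sum_(s in Delta) (coef j s)%:~R *: Phi s.
Proof. by rewrite /coef; case: cid => c []. Qed.

Lemma coef_sign j : (forall s, 0 <= coef j s) \/ (forall s, coef j s <= 0).
Proof. by rewrite /coef; case: cid => c []. Qed.

Lemma simple_coef_uniq (e e' : 'I_m -> R) :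
  \sum_(s in Delta) e s *: Phi s = \sum_(s in Delta) e' s *: Phi s ->
  forall s, s \in Delta -> e s = e' s.
Proof.
move=> ee' s sD; apply/eqP; rewrite -subr_eq0; apply/eqP; move: s sD.
by apply: hDelta.1; under eq_bigr do rewrite scalerBl; rewrite sumrB ee' subrr.
Qed.

Definition height j : R := \sum_(s in Delta) (coef j s)%:~R.

Lemma height_comb k (e : 'I_m -> R) : Phi k = \sum_(s in Delta) e s *: Phi s ->
  height k = \sum_(s in Delta) e s.
Proof.
move=> ek; apply: eq_bigr => s sD.
by apply: (@simple_coef_uniq (fun s => (coef k s)%:~R)) sD; rewrite -ek -coefE.
Qed.

Lemma height_lin k i j x y : Phi k = x *: Phi i + y *: Phi j ->
  height k = x * height i + y * height j.
Proof.
move=> ek; rewrite (@height_comb k (fun s => x * (coef i s)%:~R + y * (coef j s)%:~R)).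
  by rewrite big_split /= !mulr_sumr.
rewrite ek (coefE i) (coefE j) !scaler_sumr -big_split /=.
by apply: eq_bigr => s _; rewrite scalerDl !scalerA.
Qed.

Lemma height_opp k i : Phi k = - Phi i -> height k = - height i.
Proof.
by move=> ek; rewrite (@height_lin k i i (-1) 0) ?mulN1r ?mul0r ?addr0 // ek scale0r addr0 scaleN1r.
Qed.

Lemma height_simple s : s \in Delta -> height s = 1.
Proof.
move=> sD; rewrite (@height_comb s (fun t => if t == s then 1 else 0)) ?sum_in_if_eq //.
rewrite -[LHS](sum_in_if_eq (fun t => Phi t) sD).
by apply: eq_bigr => t _; case: eqP; rewrite ?scale1r ?scale0r.
Qed.

Lemma sum_norm_coef j : \sum_(s in Delta) `|(coef j s)%:~R| = `|height j| :> R.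
Proof.
case: (coef_sign j) => c_sign.
  rewrite ger0_norm ?sumr_ge0 // => [|s _]; last by rewrite ler0z.
  by apply: eq_bigr => s _; rewrite ger0_norm // ler0z.
rewrite ler0_norm ?sumr_le0 // => [|s _]; last by rewrite lerz0.
by rewrite -sumrN; apply: eq_bigr => s _; rewrite ler0_norm // lerz0.
Qed.

Lemma height_neq0 j : height j != 0.
Proof.
apply: contraNneq (root_neq0 j) => h0; move: (sum_norm_coef j).
rewrite h0 normr0 => /eqP; rewrite psumr_eq0 // => /allP c0.
rewrite coefE big1 // => s sD; move: (c0 s (mem_index_enum s)).
by rewrite sD normr_eq0 => /eqP ->; rewrite scale0r.
Qed.

Lemma positive_rootE j : positive_root Phi Delta j <-> 0 < height j.
Proof.
split=> [[c [c_ge0 ej]]|ht_gt0].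
  by rewrite lt_def height_neq0 (height_comb ej) sumr_ge0 // => s _; rewrite ler0z.
case: (coef_sign j) => c_sign; first by exists (coef j); split; last exact: coefE.
suff : height j <= 0 by rewrite leNgt ht_gt0.
by apply: sumr_le0 => s _; rewrite lerz0.
Qed.

Lemma in_neg_positiveE k : in_neg_positive Phi Delta k <-> height k < 0.
Proof.
split=> [[k' [/positive_rootE ht_gt0 /height_opp ->]]|ht_lt0]; first by rewrite oppr_lt0.
have [k' ek'] := root_opp k; exists k'; rewrite ek' opprK; split => //.
by apply/positive_rootE; rewrite (height_opp ek') oppr_gt0.
Qed.

Lemma height_sub k i j : Phi k = Phi i - Phi j -> height k = height i - height j.
Proof.
by move=> ek; rewrite (@height_lin k i j 1 (-1)) ?mul1r ?mulN1r // scale1r scaleN1r.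
Qed.

Lemma height_add k i j : Phi k = Phi i + Phi j -> height k = height i + height j.
Proof. by move=> ek; rewrite (@height_lin k i j 1 1) ?mul1r // !scale1r. Qed.

Lemma root_le_cover_l j j' k : root_cover Phi Delta j j' -> root_le Phi Delta j' k ->
  root_le Phi Delta j k.
Proof.
move=> cover_jj' le_j'k; elim: le_j'k cover_jj' => [l|a b c _ IH cover_bc] cover_ja.
  exact: root_le_step (root_le_refl _ _ j) cover_ja.
exact: root_le_step (IH cover_ja) cover_bc.
Qed.

(* [dotp D D] is the combination of the [dotp (Phi s) D] with the coefficients [c s >= 0]. *)
Lemma exists_simple_dotp_gt0 (D : 'rV[R]_d) (c : 'I_m -> int) :
  (forall s, 0 <= c s) -> D = \sum_(s in Delta) (c s)%:~R *: Phi s -> D != 0 ->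
  exists s, [/\ s \in Delta, 0 < c s & 0 < dotp (Phi s) D].
Proof.
move=> c_ge0 eD /dotpp_gt0; apply: contraTP => /forallNP no_s.
rewrite {1}eD dotp_suml -leNgt; apply: sumr_le0 => s sD; rewrite dotpZl.
have [c_gt0|c_le0] := ltP 0 (c s).
  by rewrite pmulr_rle0 ?ltr0z // leNgt; apply/negP => Ds_gt0; apply: (no_s s).
have -> : c s = 0 by apply/le_anti; rewrite c_le0 c_ge0.
by rewrite mul0r.
Qed.

Lemma nonneg_comb_sub_simple (D : 'rV[R]_d) (c : 'I_m -> int) s :
  (forall t, 0 <= c t) -> 0 < c s -> s \in Delta ->
  D = \sum_(t in Delta) (c t)%:~R *: Phi t ->
  exists c' : 'I_m -> int, [/\ forall t, 0 <= c' t,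
    \sum_(t in Delta) c' t = \sum_(t in Delta) c t - 1
    & D - Phi s = \sum_(t in Delta) (c' t)%:~R *: Phi t].
Proof.
move=> c_ge0 cs_gt0 sD eD; exists (fun t => c t - (if t == s then 1 else 0)); split.
- by move=> t; case: eqP => [->|_]; have := c_ge0 t; lia.
- by rewrite sumrB sum_in_if_eq.
rewrite eD -[Phi s](sum_in_if_eq (fun t => Phi t) sD) -sumrB.
by apply: eq_bigr => t _; rewrite intrB scalerBl; case: eqP => [->|_]; rewrite ?scale1r ?scale0r.
Qed.

Lemma positive_root_sub_simple k s : positive_root Phi Delta k -> s \in Delta ->
  0 < dotp (Phi k) (Phi s) -> 1 < height k ->
  exists k', Phi k' = Phi k - Phi s /\ positive_root Phi Delta k'.
Proof.
move=> _ sD ks_gt0 ht_gt1.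
have ks_neq : Phi k != Phi s.
  by apply: contraTneq ht_gt1 => /root_inj->; rewrite (height_simple sD) ltxx.
have [k' ek'] := root_sub_closed ks_gt0 ks_neq; exists k'; split=> //.
by apply/positive_rootE; rewrite (height_sub ek') (height_simple sD) subr_gt0.
Qed.

Lemma positive_root_add_simple j s : positive_root Phi Delta j -> s \in Delta ->
  dotp (Phi j) (Phi s) < 0 ->
  exists j', Phi j' = Phi j + Phi s /\ positive_root Phi Delta j'.
Proof.
move=> /positive_rootE ht_j sD js_lt0; have [s' es'] := root_opp s.
have js'_gt0 : 0 < dotp (Phi j) (Phi s') by rewrite es' dotpNr oppr_gt0.
have js'_neq : Phi j != Phi s'.
  apply: contraTneq ht_j => /root_inj->.
  by rewrite (height_opp es') (height_simple sD) oppr_gt0 ltr10.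
have [j' ej'] := root_sub_closed js'_gt0 js'_neq; rewrite es' opprK in ej'.
exists j'; split=> //; apply/positive_rootE.
by rewrite (height_add ej') (height_simple sD) addr_gt0.
Qed.

Lemma root_le_of_nonneg_diff j k (c : 'I_m -> int) : (forall s, 0 <= c s) ->
  positive_root Phi Delta j -> positive_root Phi Delta k ->
  Phi k - Phi j = \sum_(s in Delta) (c s)%:~R *: Phi s -> root_le Phi Delta j k.
Proof.
move=> c_ge0; have [N] : exists N, \sum_(s in Delta) c s = N%:Z.
  by exists (absz (\sum_(s in Delta) c s)); rewrite gez0_abs // sumr_ge0.
elim: N j k c c_ge0 => [|N IH] j k c c_ge0 sum_c pj pk eD.
  suff -> : k = j by exact: root_le_refl.
  apply/root_inj/eqP; rewrite -subr_eq0 eD big1 // => s sD.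
  move: sum_c => /eqP; rewrite psumr_eq0 // => /allP/(_ s (mem_index_enum s)).
  by rewrite sD => /eqP ->; rewrite scale0r.
have ht_k : height k = height j + (N%:R + 1).
  rewrite (@height_comb k (fun s => (coef j s)%:~R + (c s)%:~R)); last first.
    rewrite -[Phi k](subrK (Phi j)) eD (coefE j) addrC -big_split /=.
    by apply: eq_bigr => s _; rewrite scalerDl.
  by rewrite big_split /= natr1 -[N.+1%:R]/(N.+1%:~R) -sum_c rmorph_sum.
have ht_j := (positive_rootE j).1 pj; have N_ge0 : 0 <= N%:R :> R := ler0n R N.
have D_neq0 : Phi k - Phi j != 0.
  by apply/eqP => /eqP; rewrite subr_eq0 => /eqP/root_inj kj; move: ht_k; rewrite kj; lra.
have [s [sD cs_gt0 Ds_gt0]] := exists_simple_dotp_gt0 c_ge0 eD D_neq0.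
have [c' [c'_ge0 sum_c' eD']] := nonneg_comb_sub_simple c_ge0 cs_gt0 sD eD.
rewrite sum_c -addn1 PoszD addrK in sum_c'.
have [ks_gt0|js_lt0] : 0 < dotp (Phi k) (Phi s) \/ dotp (Phi j) (Phi s) < 0.
  move: Ds_gt0; rewrite dotpBr !(dotpC (Phi s)) => Ds_gt0.
  by case: (ltP 0 (dotp (Phi k) (Phi s))) => ?; [left | right; lra].
- have [|k' [ek' pk']] := positive_root_sub_simple pk sD ks_gt0; first lra.
  apply: root_le_step (IH j k' c' c'_ge0 sum_c' pj pk' _) _; first by rewrite ek' addrAC.
  by split=> //; split=> //; exists s; rewrite ek' opprB addrC subrK.
have [j' [ej' pj']] := positive_root_add_simple pj sD js_lt0.
apply: (@root_le_cover_l j j' k).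
  by split=> //; split=> //; exists s; rewrite ej' addrC addKr.
by apply: (IH j' k c') => //; rewrite ej' opprD addrA.
Qed.

Lemma root_le_of_diff_root i j l :
  positive_root Phi Delta i -> positive_root Phi Delta j ->
  Phi l = Phi j - Phi i -> 0 < height l -> root_le Phi Delta i j.
Proof.
move=> pi pj el /positive_rootE[c [c_ge0 ec]].
by apply: (root_le_of_nonneg_diff c_ge0 pi pj); rewrite -el.
Qed.

Lemma antichain_dotp_le0 Psi j k : antichain Phi Delta Psi ->
  j \in Psi -> k \in Psi -> j != k -> dotp (Phi j) (Phi k) <= 0.
Proof.
move=> [pos incomp] jP kP jk; rewrite leNgt; apply/negP => jk_gt0.
have Phi_jk : Phi j != Phi k by apply: contra_neq jk => /root_inj.
have [l el] := root_sub_closed jk_gt0 Phi_jk; have [l' el'] := root_opp l.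
case: (ltgtP (height l) 0) => [ht_lt0|ht_gt0|ht0].
- apply: (incomp j k) => //; apply: (root_le_of_diff_root (pos j jP) (pos k kP) (l := l')).
    by rewrite el' el opprB.
  by rewrite (height_opp el') oppr_gt0.
- apply: (incomp k j) => //; first by rewrite eq_sym.
  exact: root_le_of_diff_root (pos k kP) (pos j jP) el ht_gt0.
- by move: (height_neq0 l); rewrite ht0 eqxx.
Qed.

End RootSystem.

(* [dihedral_act z1 z2 l (x, y)] are the coordinates of the image of [x b + y g] under the
   word [l] in [s_b] (letter [true]) and [s_g] (letter [false]), read left to right, where
   [z1 = 2 (b, g) / (g, g)] and [z2 = 2 (g, b) / (b, b)] are the Cartan integers. *)
Fixpoint dihedral_act (z1 z2 : int) (l : seq bool) (p : int * int) : int * int :=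
  if l is t :: l' then
    dihedral_act z1 z2 l'
      (if t then (- p.1 - z2 * p.2, p.2) else (p.1, - p.2 - z1 * p.1))
  else p.

Definition alt_word (t : bool) (n : nat) : seq bool := mkseq (fun i => odd i (+) t) n.

(* The 2h elements of the dihedral group of order 2h: the alternating words of length
   [< h] starting with [s_b], and those of length [1..h] starting with [s_g]. *)
Definition dihedral_words (h : nat) : seq (seq bool) :=
  map (alt_word true) (iota 0 h) ++ map (alt_word false) (iota 1 h).

Definition dihedral_orbit (z1 z2 : int) (h : nat) : seq ((int * int) * (int * int)) :=
  [seq (dihedral_act z1 z2 l (1, 0), dihedral_act z1 z2 l (0, 1)) | l <- dihedral_words h].

(* Cartan integers [(z1, z2)] of the rank-two root systems, with [h] half the order of the Weyl group. *)
Definition rank2_types : seq (int * int * nat) :=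
  [:: (0, 0, 2%N); (-1, -1, 3%N); (-1, -2, 4%N); (-2, -1, 4%N); (-1, -3, 6%N); (-3, -1, 6%N)].

Ltac case_rank2_type :=
  rewrite !inE => /orP[/eqP[-> -> ->]|/orP[/eqP[-> -> ->]|/orP[/eqP[-> -> ->]|
    /orP[/eqP[-> -> ->]|/orP[/eqP[-> -> ->]|/eqP[-> -> ->]]]]]].

Lemma size_dihedral_words h : size (dihedral_words h) = h.*2.
Proof. by rewrite size_cat !size_map !size_iota addnn. Qed.

Lemma rank2_types_complete (z1 z2 : int) :
  (z1 = 0 /\ z2 = 0 \/ z1 < 0 /\ z2 < 0) -> z1 * z2 < 4 -> exists h, (z1, z2, h) \in rank2_types.
Proof.
move=> z_sign z12_lt4.
have [[-> ->]|[[-> ->]|[[-> ->]|[[-> ->]|[[-> ->]|[-> ->]]]]]] :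
  z1 = 0 /\ z2 = 0 \/ z1 = -1 /\ z2 = -1 \/ z1 = -1 /\ z2 = -2 \/ z1 = -2 /\ z2 = -1 \/
  z1 = -1 /\ z2 = -3 \/ z1 = -3 /\ z2 = -1 by lia.
all: by [exists 2%N | exists 3%N | exists 4%N | exists 6%N].
Qed.

Section Signs.
Variable R : realFieldType.

Definition lincomb (a b : R) (p : int * int) : R := p.1%:~R * a + p.2%:~R * b.

Ltac sign_cases :=
  repeat match goal with
  | |- context [?f < 0] => case: (ltgtP f 0) => ?
  | |- context [0 < ?f] => case: (ltgtP f 0) => ?
  end.

Lemma dihedral_orbit_count1 z1 z2 h (a b : R) : (z1, z2, h) \in rank2_types ->
  all (fun q => (lincomb a b q.1 != 0) && (lincomb a b q.2 != 0)) (dihedral_orbit z1 z2 h) ->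
  count (fun q => (lincomb a b q.1 < 0) && (lincomb a b q.2 < 0)) (dihedral_orbit z1 z2 h) = 1%N.
Proof.
case_rank2_type; match goal with |- context [dihedral_orbit ?z1 ?z2 ?h] =>
  let L := eval vm_compute in (dihedral_orbit z1 z2 h) in change (dihedral_orbit z1 z2 h) with L end;
rewrite /lincomb /= ?(mulr0z, mulr1z, mulrNz, mul0r, mul1r, mulNr, addr0, add0r, oppr0);
rewrite -?opprD ?oppr_lt0 ?oppr_eq0;
sign_cases; try by []; exfalso; lra.
Qed.

(* [c] is the cosine of the angle between the two roots. *)
Lemma rank2_prob_bounds (z1 z2 : int) (h : nat) (c : R) : (z1, z2, h) \in rank2_types ->
  c <= 0 -> c ^+ 2 = (z1 * z2)%:~R / 4 ->
  (2 * h%:R)^-1 <= 4^-1 :> R /\ c / 5 <= (2 * h%:R)^-1 - 4^-1.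
Proof. by case_rank2_type; move=> c_le0 c2; split; nra. Qed.

End Signs.

Section WeylGroup.
Variables (R : realType) (d m : nat) (Phi : 'I_m -> 'rV[R]_d).
Hypothesis hPhi : is_root_system Phi.

Definition refl_index i j : 'I_m := odflt j [pick k | Phi k == refl (Phi i) (Phi j)].

Lemma refl_indexE i j : Phi (refl_index i j) = refl (Phi i) (Phi j).
Proof.
rewrite /refl_index; case: pickP => [k /eqP //|no_k].
by have [k ek] := root_refl_closed hPhi i j; move: (no_k k); rewrite ek eqxx.
Qed.

Lemma refl_index_inj i : injective (refl_index i).
Proof.
move=> j1 j2 e; apply: (root_inj hPhi).
rewrite -(refl_invol (Phi j1) (root_neq0 hPhi i)) -(refl_invol (Phi j2) (root_neq0 hPhi i)).
by rewrite -!refl_indexE e.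
Qed.

Definition refl_perm i : {perm 'I_m} := perm (@refl_index_inj i).

Lemma refl_permE i j : Phi (refl_perm i j) = refl (Phi i) (Phi j).
Proof. by rewrite permE refl_indexE. Qed.

Lemma refl_perm_weyl i : refl_perm i \in weyl Phi.
Proof. by apply: mem_gen; rewrite inE; apply/asboolP; exists i; exact: refl_permE. Qed.

Lemma weyl_lin w k i j x y : w \in weyl Phi -> Phi k = x *: Phi i + y *: Phi j ->
  Phi (w k) = x *: Phi (w i) + y *: Phi (w j).
Proof.
move=> /gen_prodgP[n [s s_refl ->]] {w} ek; elim: n s s_refl => [|n IH] s s_refl.
  by rewrite big_ord0 !perm1.
have := s_refl ord_max; rewrite inE => /asboolP[i0 e0].
rewrite big_ord_recr /= !permM !e0 (IH (fun l => s (widen_ord (leqnSn n) l))) //.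
by rewrite refl_lin.
Qed.

Variable Delta : {set 'I_m}.
Hypothesis hDelta : is_simple_system Phi Delta.

Lemma height_weyl_lin w k i j x y : w \in weyl Phi -> Phi k = x *: Phi i + y *: Phi j ->
  height hDelta (w k) = x * height hDelta (w i) + y * height hDelta (w j).
Proof. by move=> wW ek; apply: height_lin; apply: weyl_lin. Qed.

Definition negated j (w : {perm 'I_m}) : bool := height hDelta (w j) < 0.

Definition dihedral_perm (b g : 'I_m) (l : seq bool) : {perm 'I_m} :=
  foldr (fun t p => refl_perm (if t then b else g) * p)%g 1%g l.

Lemma dihedral_perm_weyl b g l : dihedral_perm b g l \in weyl Phi.
Proof. by elim: l => [|t l IH] /=; rewrite ?group1 // groupM // refl_perm_weyl. Qed.

Lemma dihedral_permE b g (z1 z2 : int) l j (x y : int) :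
  cartan Phi g b = z1%:~R -> cartan Phi b g = z2%:~R ->
  Phi j = x%:~R *: Phi b + y%:~R *: Phi g ->
  Phi (dihedral_perm b g l j) = (dihedral_act z1 z2 l (x, y)).1%:~R *: Phi b
                                + (dihedral_act z1 z2 l (x, y)).2%:~R *: Phi g.
Proof.
move=> e1 e2; elim: l j x y => [|t l IH] j x y ej /=; first by rewrite perm1.
rewrite permM; case: t; apply: IH; rewrite refl_permE ej refl_lin.
  rewrite refl_self ?root_neq0 // reflE e2.
  by apply/rowP => i; rewrite !mxE !(rmorphB, rmorphN, rmorphM) /=; ring.
rewrite [refl (Phi g) (Phi g)]refl_self ?root_neq0 // reflE e1.
by apply/rowP => i; rewrite !mxE !(rmorphB, rmorphN, rmorphM) /=; ring.
Qed.

Lemma card_negated_pair b g (z1 z2 : int) h :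
  cartan Phi g b = z1%:~R -> cartan Phi b g = z2%:~R -> (z1, z2, h) \in rank2_types ->
  (#|[set w in weyl Phi | negated b w && negated g w]| * h.*2)%N = #|weyl Phi|.
Proof.
move=> e1 e2 hz; rewrite -(size_dihedral_words h) -(size_map (dihedral_perm b g)).
apply: card_set_count1_cosets => [_ /mapP[l _ ->]|w wW].
  exact: dihedral_perm_weyl.
have eb : Phi b = 1%:~R *: Phi b + 0%:~R *: Phi g by rewrite scale1r scale0r addr0.
have eg : Phi g = 0%:~R *: Phi b + 1%:~R *: Phi g by rewrite scale1r scale0r add0r.
have ht_orbit l j (x y : int) : Phi j = x%:~R *: Phi b + y%:~R *: Phi g ->
    height hDelta ((dihedral_perm b g l * w)%g j) =
    lincomb (height hDelta (w b)) (height hDelta (w g)) (dihedral_act z1 z2 l (x, y)).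
  by move=> ej; rewrite permM; apply: height_weyl_lin => //; apply: dihedral_permE.
rewrite count_map -(dihedral_orbit_count1 (a := height hDelta (w b)) (b := height hDelta (w g)) hz).
  rewrite /dihedral_orbit count_map; apply: eq_count => l /=.
  by rewrite /negated (ht_orbit l b 1 0 eb) (ht_orbit l g 0 1 eg).
rewrite /dihedral_orbit all_map; apply/allP => l _ /=.
by rewrite -(ht_orbit l b 1 0 eb) -(ht_orbit l g 0 1 eg) !height_neq0.
Qed.

Definition prob_negated j k : R :=
  #|[set w in weyl Phi | negated j w && negated k w]|%:R / #|weyl Phi|%:R.

Lemma prob_negated_card j k N :
  (#|[set w in weyl Phi | negated j w && negated k w]| * N)%N = #|weyl Phi| ->
  prob_negated j k = N%:R^-1.
Proof.
move=> eN; have W_gt0 : (0 < #|weyl Phi|)%N := cardG_gt0 _.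
rewrite /prob_negated -eN natrM invfM mulrA divff ?mul1r // pnatr_eq0.
by apply: contraTneq W_gt0 => S0; rewrite -eN S0.
Qed.

Lemma prob_negated_self j : prob_negated j j = 2^-1.
Proof.
apply: prob_negated_card; rewrite -[2%N]/(size [:: 1%g; refl_perm j]).
apply: card_set_count1_cosets => [v|w wW].
  by rewrite !inE => /orP[|] /eqP->; rewrite ?group1 ?refl_perm_weyl.
have ht_sj : height hDelta (w (refl_perm j j)) = - height hDelta (w j).
  rewrite (@height_weyl_lin w _ j j (-1) 0) ?mulN1r ?mul0r ?addr0 //.
  by rewrite refl_permE refl_self ?root_neq0 // scale0r addr0 scaleN1r.
rewrite /= !andbb mul1g /negated permM ht_sj oppr_lt0 addn0.
by have := height_neq0 hPhi hDelta (w j); case: ltgtP.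
Qed.

Lemma prob_negated_pair j k (z1 z2 : int) h :
  cartan Phi k j = z1%:~R -> cartan Phi j k = z2%:~R -> (z1, z2, h) \in rank2_types ->
  prob_negated j k = (2 * h%:R)^-1.
Proof.
by move=> e1 e2 hz; rewrite (prob_negated_card (card_negated_pair e1 e2 hz)) -mul2n natrM.
Qed.

End WeylGroup.

Section Cosine.
Variables (R : realType) (d m : nat) (Phi : 'I_m -> 'rV[R]_d).

Definition root_cos j k : R :=
  dotp (Phi j) (Phi k) / (Num.sqrt (dotp (Phi j) (Phi j)) * Num.sqrt (dotp (Phi k) (Phi k))).

Lemma sum_root_cos_ge0 (A : {pred 'I_m}) : 0 <= \sum_(j in A) \sum_(k in A) root_cos j k.
Proof.
pose u := \sum_(j in A) (Num.sqrt (dotp (Phi j) (Phi j)))^-1 *: Phi j.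
suff -> : \sum_(j in A) \sum_(k in A) root_cos j k = dotp u u by exact: dotpp_ge0.
rewrite dotp_suml; apply: eq_bigr => j _; rewrite dotp_sumr; apply: eq_bigr => k _.
by rewrite dotpZl dotpZr /root_cos invfM; ring.
Qed.

Hypothesis hPhi : is_root_system Phi.

Lemma root_cos_self j : root_cos j j = 1.
Proof.
by rewrite /root_cos -expr2 sqr_sqrtr ?dotpp_ge0 // divff // lt0r_neq0 ?dotp_root_gt0.
Qed.

Lemma root_cos_sqr j k : root_cos j k ^+ 2 = cartan Phi j k * cartan Phi k j / 4.
Proof.
have jj_gt0 := dotp_root_gt0 hPhi j; have kk_gt0 := dotp_root_gt0 hPhi k.
rewrite /root_cos /cartan expr_div_n exprMn !sqr_sqrtr ?ltW // (dotpC (Phi k)).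
by field; rewrite !lt0r_neq0.
Qed.

Lemma root_cos_le0 j k : dotp (Phi j) (Phi k) <= 0 -> root_cos j k <= 0.
Proof.
move=> jk_le0; rewrite /root_cos pmulr_lle0 // invr_gt0 mulr_gt0 // sqrtr_gt0.
  exact: dotp_root_gt0.
exact: dotp_root_gt0.
Qed.

End Cosine.

Section Variance.
Variables (R : realType) (d m : nat) (Phi : 'I_m -> 'rV[R]_d) (Delta : {set 'I_m}).
Hypotheses (hPhi : is_root_system Phi) (hDelta : is_simple_system Phi Delta).

Lemma antichain_pair_rank2_type Psi j k : antichain Phi Delta Psi ->
  j \in Psi -> k \in Psi -> j != k ->
  exists (z1 z2 : int) h,
    [/\ cartan Phi k j = z1%:~R, cartan Phi j k = z2%:~R & (z1, z2, h) \in rank2_types].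
Proof.
move=> anti jP kP jk; have jk_le0 := antichain_dotp_le0 hPhi hDelta anti jP kP jk.
have /intrP[z1 e1] := cartan_int hPhi k j; have /intrP[z2 e2] := cartan_int hPhi j k.
have ne_kj : Phi k != Phi j by apply: contra_neq jk => /(root_inj hPhi).
have ne_opp : Phi k != - Phi j.
  apply/eqP => /(height_opp hDelta); have := (positive_rootE hPhi hDelta j).1 (anti.1 j jP).
  have := (positive_rootE hPhi hDelta k).1 (anti.1 k kP); lra.
suff [h hz] : exists h, (z1, z2, h) \in rank2_types by exists z1, z2, h.
apply: rank2_types_complete; last first.
  by rewrite -(ltr_int R) intrM -e1 -e2 mulrC cartan_mul_lt4.
move: jk_le0; rewrite le_eqVlt => /orP[jk0|jk_lt0]; [left|right]; split.
- by apply/eqP; rewrite -(intr_eq0 R) -e1 (cartan_eq0 hPhi) dotpC.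
- by apply/eqP; rewrite -(intr_eq0 R) -e2 (cartan_eq0 hPhi).
- by rewrite -(ltrz0 R) -e1 (cartan_lt0 hPhi) dotpC.
- by rewrite -(ltrz0 R) -e2 (cartan_lt0 hPhi).
Qed.

Lemma prob_negated_antichain Psi j k : antichain Phi Delta Psi ->
  j \in Psi -> k \in Psi -> j != k ->
  prob_negated hDelta j k <= 4^-1 /\
  root_cos Phi j k / 5 <= prob_negated hDelta j k - 4^-1.
Proof.
move=> anti jP kP jk.
have [z1 [z2 [h [e1 e2 hz]]]] := antichain_pair_rank2_type anti jP kP jk.
rewrite (prob_negated_pair hPhi hDelta e1 e2 hz); apply: (rank2_prob_bounds hz).
  exact/root_cos_le0/(antichain_dotp_le0 hPhi hDelta anti jP kP jk).
by rewrite intrM -e1 -e2 (root_cos_sqr hPhi) (mulrC (cartan Phi j k)).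
Qed.

Lemma expect_sum (I : finType) (A : {pred I}) (F : I -> {perm 'I_m} -> R) :
  expect Phi (fun w => \sum_(i in A) F i w) = \sum_(i in A) expect Phi (F i).
Proof. by rewrite /expect exchange_big mulr_suml. Qed.

Lemma expect_indicator (B : pred {perm 'I_m}) :
  expect Phi (fun w => (B w)%:R) = #|[set w in weyl Phi | B w]|%:R / #|weyl Phi|%:R.
Proof.
rewrite /expect; congr (_ / _).
rewrite -sum1_card natr_sum big_mkcond [in RHS]big_mkcond /=.
by apply: eq_bigr => w _; rewrite inE; case: (w \in weyl Phi); case: (B w).
Qed.

Lemma X_PsiE Psi : X_Psi Phi Delta Psi = fun w => \sum_(j in Psi) (negated hDelta j w)%:R.
Proof.
apply/funext => w; rewrite /X_Psi -sum1_card natr_sum big_mkcond [in RHS]big_mkcond /=.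
apply: eq_bigr => j _; rewrite inE; case: (j \in Psi) => //=.
have -> : `[< in_neg_positive Phi Delta (w j) >] = negated hDelta j w.
  by apply/asboolP/idP => /(in_neg_positiveE hPhi hDelta).
by case: negated.
Qed.

Lemma var_X_pairs Psi : var_X Phi Delta Psi =
  \sum_(j in Psi) \sum_(k in Psi) (prob_negated hDelta j k - 4^-1).
Proof.
have E_X : expect Phi (X_Psi Phi Delta Psi) = \sum_(j in Psi) 2^-1.
  rewrite X_PsiE expect_sum; apply: eq_bigr => j _.
  rewrite expect_indicator -(prob_negated_self hPhi hDelta j) /prob_negated.
  suff -> : [set w in weyl Phi | negated hDelta j w & negated hDelta j w] =
            [set w in weyl Phi | negated hDelta j w] by [].
  by apply/setP => w; rewrite !inE andbb.
have E_X2 : expect Phi (fun w => X_Psi Phi Delta Psi w ^+ 2) =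
            \sum_(j in Psi) \sum_(k in Psi) prob_negated hDelta j k.
  rewrite X_PsiE; under eq_fun do rewrite expr2 mulr_suml; rewrite expect_sum.
  apply: eq_bigr => j _; under eq_fun do rewrite mulr_sumr; rewrite expect_sum.
  by apply: eq_bigr => k _; under eq_fun do rewrite -natrM mulnb; rewrite expect_indicator.
rewrite /var_X E_X2 E_X expr2 mulr_suml -sumrB; apply: eq_bigr => j _.
by rewrite mulr_sumr -sumrB; apply: eq_bigr => k _; congr (_ - _); lra.
Qed.

Lemma var_X_le Psi : antichain Phi Delta Psi -> var_X Phi Delta Psi <= 4^-1 * #|Psi|%:R.
Proof.
move=> anti; rewrite var_X_pairs mulr_natr -sumr_const; apply: ler_sum => j jP.
rewrite (bigD1 j) //= (prob_negated_self hPhi).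
suff : \sum_(k in Psi | k != j) (prob_negated hDelta j k - 4^-1) <= 0 by lra.
apply: sumr_le0 => k /andP[kP kj].
have jk : j != k by rewrite eq_sym.
by have [+ _] := prob_negated_antichain anti jP kP jk; lra.
Qed.

Lemma var_X_ge Psi : antichain Phi Delta Psi -> 20^-1 * #|Psi|%:R <= var_X Phi Delta Psi.
Proof.
move=> anti; rewrite var_X_pairs.
apply: (@le_trans _ _ (\sum_(j in Psi) \sum_(k in Psi)
                        (root_cos Phi j k / 5 + if k == j then 20^-1 else 0))).
  rewrite (eq_bigr (fun j => \sum_(k in Psi) root_cos Phi j k / 5 + 20^-1)); last first.
    by move=> j jP; rewrite big_split /= sum_in_if_eq.
  rewrite big_split /= sumr_const mulr_natr ler_wpDl //.
  under eq_bigr do rewrite -mulr_suml.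
  by rewrite -mulr_suml; apply: mulr_ge0; [exact: sum_root_cos_ge0 | lra].
apply: ler_sum => j jP; apply: ler_sum => k kP.
have [->|kj] := eqVneq k j; first by rewrite (prob_negated_self hPhi) (root_cos_self hPhi); lra.
rewrite addr0; have jk : j != k by rewrite eq_sym.
exact: (prob_negated_antichain anti jP kP jk).2.
Qed.

End Variance.

Theorem proposition4p4 (R : realType) (d m : nat -> nat)
  (Phi : forall n, 'I_(m n) -> 'rV[R]_(d n))
  (Delta Psi : forall n, {set 'I_(m n)})
  (hPhi : forall n, is_root_system (Phi n))
  (hDelta : forall n, is_simple_system (Phi n) (Delta n))
  (hPsi : forall n, antichain (Phi n) (Delta n) (Psi n)) :
  exists (c C : R) (N : nat), 0 < c /\ 0 < C /\
    forall n, (N <= n)%N ->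
      c * (#|Psi n|)%:R <= var_X (Phi n) (Delta n) (Psi n) <= C * (#|Psi n|)%:R.
Proof.
exists 20^-1, 4^-1, 0%N; split; first by rewrite invr_gt0.
split; first by rewrite invr_gt0.
move=> n _; apply/andP; split.
  exact: var_X_ge (hPhi n) (hDelta n) _ (hPsi n).
exact: var_X_le (hPhi n) (hDelta n) _ (hPsi n).
Qed.
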